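(* Let $\phi$ be a formula and suppose $\xi\models_{\mathbf t}\phi$ for some model $\xi$ and time instant $\mathbf t$. Then there exist a model $\eta$ and positive integers $k$, $m$, and $l_i,n_i$ for $i=1,\dots,k+m$, such that: (1) $\eta\models_{\langle 0,0\rangle}\phi$; (2) $\eta(i,j,p)=\eta(i+m,j,p)$ for all $i>k$, all $j\in\omega$ and all $p\in Var$; (3) $\eta(i,j,p)=\eta(i,j+n_i,p)$ for all $i\le k+m$, all $j>l_i$ and all $p\in Var$; (4) $\max(m,n_1,\dots,n_m)\le\mathrm{length}(\phi)\cdot 2^{\mathrm{length}(\phi)}$; (5) $\max(k,l_1,\dots,l_{k+m})\le 2^{\mathrm{length}(\phi)}$.
   Context: Fix $Var=\{p_n : n\in\omega\}$. The formulas of $L([1],[\omega],\mathtt u,\mathtt U)$ form the smallest set containing $Var$ and closed under $\neg\phi$, $[1]\phi$, $[\omega]\phi$, $(\phi\wedge\psi)$, $(\phi\,\mathtt u\,\psi)$, $(\phi\,\mathtt U\,\psi)$; $\mathrm{length}(\phi)$ is the number of symbols in $\phi$. Time instants are pairs $\mathbf t=\langle t_1,t_2\rangle\in\omega\times\omega$ ordered lexicographically. A model is a function $\xi:\omega\times\omega\times Var\to\{0,1\}$. Satisfaction: $\xi\models_{\mathbf r}p$ iff $\xi(r_1,r_2,p)=1$; $\neg,\wedge$ classical; $\xi\models_{\mathbf r}[1]\phi$ iff $\xi\models_{\langle r_1,r_2+1\rangle}\phi$; $\xi\models_{\mathbf r}[\omega]\phi$ iff $\xi\models_{\langle r_1+1,0\rangle}\phi$;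 $\xi\models_{\mathbf r}\phi\,\mathtt u\,\psi$ iff there is $k\in\omega$ with $\xi\models_{\langle r_1,r_2+k\rangle}\psi$ and $\xi\models_{\langle r_1,r_2+i\rangle}\phi$ for all $0\le i<k$; $\xi\models_{\mathbf r}\phi\,\mathtt U\,\psi$ iff there is $\mathbf s\ge\mathbf r$ with $\xi\models_{\mathbf s}\psi$ and $\xi\models_{\mathbf t}\phi$ for all $\mathbf r\le\mathbf t<\mathbf s$. *)

From Stdlib Require Import Arith.

(* Formulas of L([1],[omega],u,U); propositional variable p_n is [Var n]. *)
Inductive formula : Type :=
| Var : nat -> formula
| Neg : formula -> formula
| Next1 : formula -> formula
| NextOmega : formula -> formula
| And : formula -> formula -> formula
| Until1 : formula -> formula -> formula
| UntilOmega : formula -> formula -> formula.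

(* Number of symbols: p_n, ~, [1], [omega] each count as one symbol;
   binary formulas contribute two parentheses and the connective. *)
Fixpoint length (f : formula) : nat :=
  match f with
  | Var _ => 1
  | Neg a => S (length a)
  | Next1 a => S (length a)
  | NextOmega a => S (length a)
  | And a b => length a + length b + 3
  | Until1 a b => length a + length b + 3
  | UntilOmega a b => length a + length b + 3
  end.

(* A model: xi t1 t2 n is the truth value of p_n at instant <t1,t2>. *)
Definition model := nat -> nat -> nat -> bool.

Definition lex_le (r1 r2 s1 s2 : nat) : Prop :=
  r1 < s1 \/ (r1 = s1 /\ r2 <= s2).

Fixpoint sat (xi : model) (r1 r2 : nat) (f : formula) : Prop :=
  match f with
  | Var n => xi r1 r2 n = true
  | Neg a => ~ sat xi r1 r2 a
  | Next1 a => sat xi r1 (S r2) a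
  | NextOmega a => sat xi (S r1) 0 a
  | And a b => sat xi r1 r2 a /\ sat xi r1 r2 b
  | Until1 a b => exists k, sat xi r1 (r2 + k) b /\
                    forall i, i < k -> sat xi r1 (r2 + i) a
  | UntilOmega a b => exists s1 s2, lex_le r1 r2 s1 s2 /\ sat xi s1 s2 b /\
                    forall t1 t2, lex_le r1 r2 t1 t2 ->
                      (t1 < s1 \/ (t1 = s1 /\ t2 < s2)) -> sat xi t1 t2 a
  end.

(* Given xi |=_<t1,t2> phi, we build eta by folding xi: row a of eta reads row
   rho a of xi at the positions col a 0, col a 1, ...  An instant is summarised
   by its type, the set of formulas of the closure of phi (subformulas and, for
   each a U b, its row-local companion a u b) true there; there are at most
   2^length(phi) types.  Positions are chosen as lassos in the type sequence
   (a stem of at most N positions, then a loop of at most (g+1)N positions,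
   N = number of types, g = number of eventualities to preserve): the
   successor of a chosen position always has the type of the next chosen one,
   and the loop lies where every type recurs and visits every satisfiable
   eventuality. *)
From Stdlib Require Import Arith Lia List Classical ClassicalEpsilon.
Import ListNotations.

(** * Lassos through a sequence of finitely many types *)

Lemma injective_bound (h : nat -> nat) n N :
  (forall i, i < n -> h i < N) ->
  (forall i j, i < n -> j < n -> h i = h j -> i = j) -> n <= N.
Proof.
  intros Hb Hi.
  assert (Hnd : NoDup (map h (seq 0 n))).
  { apply (NoDup_nth _ (h 0)). rewrite length_map, length_seq. intros i j Hi' Hj' E.
    rewrite !map_nth, !seq_nth in E by lia. apply Hi; auto. }
  assert (Hincl : incl (map h (seq 0 n)) (seq 0 N)).
  { intros x Hx. apply in_map_iff in Hx. destruct Hx as [i [<- Hi']].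
    apply in_seq in Hi'. apply in_seq. specialize (Hb i). lia. }
  pose proof (NoDup_incl_length Hnd Hincl) as Hlen.
  now rewrite length_map, !length_seq in Hlen.
Qed.

Lemma eventually_recurrent (f : nat -> nat) N (Hf : forall x, f x < N) :
  exists J, 1 <= J /\ forall x, J <= x -> forall y, exists z, y < z /\ f z = f x.
Proof.
  assert (G : forall L, exists J, 1 <= J /\ forall x, J <= x -> In (f x) L ->
            forall y, exists z, y < z /\ f z = f x).
  { induction L as [|c L IH].
    - exists 1. split; [lia|]. intros x _ [].
    - destruct IH as [J [HJ1 HJ]].
      destruct (classic (forall y, exists z, y < z /\ f z = c)) as [Hc|Hc].
      + exists J. split; auto. intros x Hx [E|Hin] y.
        * rewrite <- E. apply Hc.
        * apply HJ; auto.
      + apply not_all_ex_not in Hc. destruct Hc as [y0 Hy0].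
        exists (Nat.max J (S y0)). split; [lia|]. intros x Hx [E|Hin] y.
        * exfalso. apply Hy0. exists x. split; [lia|auto].
        * apply HJ; auto. lia. }
  destruct (G (seq 0 N)) as [J [HJ1 HJ]]. exists J. split; auto.
  intros x Hx. apply HJ; auto. apply in_seq. specialize (Hf x). lia.
Qed.

Definition consistent_path (f : nat -> nat) (p : nat -> nat) (n : nat) : Prop :=
  forall i, S i < n -> f (p (S i)) = f (S (p i)).

Lemma distinct_path (f : nat -> nat) a e :
  exists p n, 1 <= n /\ p 0 = a /\ consistent_path f p n /\
    (forall i, i < n -> a <= p i <= a + e) /\ f (S (p (n - 1))) = f (S (a + e)) /\
    (forall i j, i < n -> j < n -> f (S (p i)) = f (S (p j)) -> i = j).
Proof.
  induction e as [|e IH].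
  - exists (fun _ => a), 1. unfold consistent_path.
    repeat split; intros; try lia. now rewrite Nat.add_0_r.
  - destruct IH as [p [n [Hn [Hp0 [Hv [Hr [Hl Hinj]]]]]]].
    destruct (classic (exists i, i < n /\ f (S (p i)) = f (S (a + S e)))) as [[i [Hi Ei]]|Hno].
    + (* the new target type was already reached: cut the path there *)
      exists p, (S i). unfold consistent_path in *.
      split; [lia|]. split; [auto|]. split.
      { intros j Hj. apply Hv. lia. } split.
      { intros j Hj. specialize (Hr j ltac:(lia)). lia. } split.
      { now replace (S i - 1) with i by lia. }
      intros j k Hj Hk E. apply Hinj; auto; lia.
    +
      exists (fun j => if j =? n then a + S e else p j), (S n). unfold consistent_path in *.
      split; [lia|]. split.
      { destruct (Nat.eqb_spec 0 n); [lia|auto]. } split.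
      { intros j Hj. destruct (Nat.eqb_spec (S j) n), (Nat.eqb_spec j n); try lia.
        - replace j with (n - 1) by lia. rewrite Hl. f_equal; lia.
        - apply Hv. lia. } split.
      { intros j Hj. destruct (Nat.eqb_spec j n); [lia|]. specialize (Hr j ltac:(lia)). lia. } split.
      { replace (S n - 1) with n by lia. now rewrite Nat.eqb_refl. }
      intros j k Hj Hk.
      destruct (Nat.eqb_spec j n), (Nat.eqb_spec k n); intro E; try lia.
      * exfalso. apply Hno. exists k. split; [lia|]. congruence.
      * exfalso. apply Hno. exists j. split; [lia|]. congruence.
      * apply Hinj; auto; lia.
Qed.

Lemma short_path (f : nat -> nat) N (Hf : forall x, f x < N) a e :
  exists p n, 1 <= n <= N /\ p 0 = a /\ consistent_path f p n /\
    (forall i, i < n -> a <= p i) /\ f (S (p (n - 1))) = f (S (a + e)).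
Proof.
  destruct (distinct_path f a e) as [p [n [Hn [Hp0 [Hv [Hr [Hl Hinj]]]]]]].
  exists p, n. repeat split; auto.
  - apply (injective_bound (fun i => f (S (p i)))); auto.
  - intros i Hi. apply Hr; auto.
Qed.

Lemma loop_through (f : nat -> nat) N (Hf : forall x, f x < N) J
  (Hrec : forall x, J <= x -> forall y, exists z, y < z /\ f z = f x) x0 (Hx0 : J <= x0) :
  forall ts, (forall t, In t ts -> J <= t) -> forall cur, J <= cur ->
  exists q n, 1 <= n <= (List.length ts + 1) * N /\ q 0 = cur /\ consistent_path f q n /\
    (forall i, i < n -> J <= q i) /\ (forall t, In t ts -> exists i, i < n /\ f (q i) = f t) /\
    f (S (q (n - 1))) = f x0.
Proof.
  induction ts as [|t ts IH]; intros Hts cur Hcur.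
  - destruct (Hrec x0 Hx0 cur) as [z [Hz Ez]].
    destruct (short_path f N Hf cur (z - 1 - cur)) as [p [n [Hn [Hp0 [Hv [Hr Hl]]]]]].
    exists p, n. split; [simpl; lia|]. split; auto. split; auto. split.
    { intros i Hi. specialize (Hr i Hi). lia. } split.
    { intros t' []. }
    rewrite Hl, <- Ez. f_equal. lia.
  - assert (Ht : J <= t) by (apply Hts; left; auto).
    destruct (Hrec t Ht cur) as [z [Hz Ez]].
    destruct (short_path f N Hf cur (z - 1 - cur)) as [p [n [Hn [Hp0 [Hv [Hr Hl]]]]]].
    destruct (IH (fun t' H' => Hts t' (or_intror H')) z ltac:(lia)) as
        [q [m [Hm [Hq0 [Hqv [Hqr [Hqw Hql]]]]]]].
    exists (fun i => if i <? n then p i else q (i - n)), (n + m).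
    split; [simpl; nia|]. split.
    { destruct (Nat.ltb_spec 0 n); [auto|lia]. } split.
    { intros i Hi. destruct (Nat.ltb_spec (S i) n), (Nat.ltb_spec i n); try lia.
      - apply Hv. auto.
      - assert (i = n - 1) by lia. subst i. replace (S (n - 1) - n) with 0 by lia.
        rewrite Hq0, Hl. f_equal. lia.
      - replace (S i - n) with (S (i - n)) by lia. apply Hqv. lia. } split.
    { intros i Hi. destruct (Nat.ltb_spec i n).
      - specialize (Hr i ltac:(lia)). lia.
      - apply Hqr. lia. } split.
    { intros t' [<-|Hin].
      - exists n. split; [lia|]. now rewrite Nat.ltb_irrefl, Nat.sub_diag, Hq0.
      - destruct (Hqw t' Hin) as [i [Hi Ei]]. exists (n + i). split; [lia|].
        destruct (Nat.ltb_spec (n + i) n); [lia|].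
        now replace (n + i - n) with i by lia. }
    destruct (Nat.ltb_spec (n + m - 1) n); [lia|].
    rewrite <- Hql. do 3 f_equal. lia.
Qed.

Section Splice.
Variables (f : nat -> nat) (p q : nat -> nat) (nP nL : nat).
Hypotheses (HnP : 1 <= nP) (HnL : 1 <= nL).

Definition splice (b : nat) : nat := if b <? nP then p b else q ((b - nP) mod nL).

Lemma splice_start : splice 0 = p 0.
Proof. unfold splice. destruct (Nat.ltb_spec 0 nP); [auto|lia]. Qed.

Lemma splice_step (Hpv : consistent_path f p nP) (Hqv : consistent_path f q nL)
  (Hentry : f (q 0) = f (S (p (nP - 1)))) (Hclose : f (q 0) = f (S (q (nL - 1)))) b :
  f (splice (S b)) = f (S (splice b)).
Proof.
  unfold splice. destruct (Nat.ltb_spec (S b) nP), (Nat.ltb_spec b nP); try lia.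
  - apply Hpv. auto.
  - assert (b = nP - 1) by lia. subst b. replace (S (nP - 1) - nP) with 0 by lia.
    now rewrite Nat.Div0.mod_0_l.
  - replace (S b - nP) with ((b - nP) + 1) by lia.
    rewrite <- Nat.Div0.add_mod_idemp_l.
    assert (Hm := Nat.mod_upper_bound (b - nP) nL ltac:(lia)).
    destruct (Nat.eq_dec ((b - nP) mod nL + 1) nL) as [Eq|Ne].
    + rewrite Eq, Nat.Div0.mod_same. rewrite Hclose. do 3 f_equal. lia.
    + rewrite Nat.mod_small by lia. rewrite Nat.add_1_r. apply Hqv. lia.
Qed.

Lemma splice_periodic b : nP <= b -> splice (b + nL) = splice b.
Proof.
  intro Hb. unfold splice. destruct (Nat.ltb_spec (b + nL) nP), (Nat.ltb_spec b nP); try lia.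
  replace (b + nL - nP) with ((b - nP) + 1 * nL) by lia. now rewrite Nat.Div0.mod_add.
Qed.

Lemma splice_in_loop b : nP <= b -> exists i, i < nL /\ splice b = q i.
Proof.
  intro Hb. unfold splice. destruct (Nat.ltb_spec b nP); [lia|].
  exists ((b - nP) mod nL). split; auto. apply Nat.mod_upper_bound. lia.
Qed.

Lemma splice_visits b i : nP <= b -> i < nL -> exists k, splice (b + k) = q i.
Proof.
  intros Hb Hi. set (x := b - nP).
  exists (nL - x mod nL + i). unfold splice.
  destruct (Nat.ltb_spec (b + (nL - x mod nL + i)) nP); [lia|].
  assert (Hm := Nat.mod_upper_bound x nL ltac:(lia)).
  assert (Hd := Nat.div_mod_eq x nL).
  replace (b + (nL - x mod nL + i) - nP) with (i + (x / nL + 1) * nL) by (subst x; nia).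
  rewrite Nat.Div0.mod_add. now rewrite Nat.mod_small by lia.
Qed.
End Splice.

Lemma choose_targets (goals : list (nat -> Prop)) J :
  exists ts, List.length ts = List.length goals /\ (forall t, In t ts -> J <= t) /\
    forall P, In P goals -> (exists x, J <= x /\ P x) -> exists t, In t ts /\ P t.
Proof.
  induction goals as [|P0 goals IH].
  - exists []. split; auto. split; [intros t []|]. intros P [].
  - destruct IH as [ts [Hl [Hj Hw]]].
    destruct (classic (exists x, J <= x /\ P0 x)) as [[x [Hx Px]]|Hn].
    + exists (x :: ts). split; [simpl; auto|]. split.
      { intros t [<-|Ht]; auto. }
      intros P [<-|HP] He.
      * exists x. split; [left|]; auto.
      * destruct (Hw P HP He) as [t [Ht Pt]]. exists t. split; [right|]; auto.
    + exists (J :: ts). split; [simpl; auto|]. split.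
      { intros t [<-|Ht]; auto. }
      intros P [<-|HP] He.
      * contradiction.
      * destruct (Hw P HP He) as [t [Ht Pt]]. exists t. split; [right|]; auto.
Qed.

Record lasso (f : nat -> nat) (N : nat) (goals : list (nat -> Prop)) (c0 : nat) : Type := {
  pos : nat -> nat;
  stem : nat;
  loop : nat;
  horizon : nat;
  stem_bound : 1 <= stem <= N;
  loop_bound : 1 <= loop <= (List.length goals + 1) * N;
  pos_start : pos 0 = c0;
  pos_step : forall b, f (pos (S b)) = f (S (pos b));
  pos_periodic : forall b, stem <= b -> pos (b + loop) = pos b;
  pos_late : forall b, stem <= b -> horizon <= pos b;
  pos_recurrent : forall P, In P goals -> (exists x, horizon <= x /\ P x) ->
    forall b, stem <= b -> exists k, P (pos (b + k)) }.

Arguments pos {f N goals c0}.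
Arguments stem {f N goals c0}.
Arguments loop {f N goals c0}.
Arguments horizon {f N goals c0}.
Arguments stem_bound {f N goals c0}.
Arguments loop_bound {f N goals c0}.
Arguments pos_start {f N goals c0}.
Arguments pos_step {f N goals c0}.
Arguments pos_periodic {f N goals c0}.
Arguments pos_late {f N goals c0}.
Arguments pos_recurrent {f N goals c0}.

Lemma lasso_exists (f : nat -> nat) N (Hf : forall x, f x < N) (goals : list (nat -> Prop))
  (Hinv : forall P, In P goals -> forall x y, f x = f y -> P x -> P y) c0 :
  inhabited (lasso f N goals c0).
Proof.
  destruct (eventually_recurrent f N Hf) as [J [HJ1 Hrec]].
  destruct (choose_targets goals J) as [ts [Htl [Htj Htw]]].
  destruct (short_path f N Hf c0 (J - 1)) as [p [nP [HnP [Hp0 [Hpv [_ Hpl]]]]]].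
  destruct (loop_through f N Hf J Hrec (c0 + J) ltac:(lia) ts Htj (c0 + J) ltac:(lia))
    as [q [nL [HnL [Hq0 [Hqv [Hqj [Hqw Hql]]]]]]].
  assert (Hentry : f (q 0) = f (S (p (nP - 1)))) by (rewrite Hpl, Hq0; f_equal; lia).
  assert (Hclose : f (q 0) = f (S (q (nL - 1)))) by (now rewrite Hql, Hq0).
  constructor. refine {| pos := splice p q nP nL; stem := nP; loop := nL; horizon := J |}.
  - exact HnP.
  - now rewrite <- Htl.
  - rewrite splice_start by lia. exact Hp0.
  - apply splice_step; auto; lia.
  - apply splice_periodic; lia.
  - intros b Hb. destruct (splice_in_loop p q nP nL ltac:(lia) ltac:(lia) b Hb) as [i [Hi ->]]. auto.
  - intros P HP He b Hb.
    destruct (Htw P HP He) as [t [Ht Pt]].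
    destruct (Hqw t Ht) as [i [Hi Ei]].
    destruct (splice_visits p q nP nL ltac:(lia) ltac:(lia) b i Hb Hi) as [k Hk].
    exists k. rewrite Hk. apply (Hinv P HP t); auto.
Qed.

Definition some_lasso (f : nat -> nat) N (Hf : forall x, f x < N) (goals : list (nat -> Prop))
  (Hinv : forall P, In P goals -> forall x y, f x = f y -> P x -> P y) c0 : lasso f N goals c0 :=
  epsilon (lasso_exists f N Hf goals Hinv c0) (fun _ => True).

(** * Subformulas, closure and eventualities *)

Fixpoint subformulas (f : formula) : list formula :=
  f :: match f with
       | Var _ => []
       | Neg a | Next1 a | NextOmega a => subformulas a
       | And a b | Until1 a b | UntilOmega a b => subformulas a ++ subformulas b
       end.

Fixpoint companions (f : formula) : list formula :=
  match f with
  | Var _ => []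
  | Neg a | Next1 a | NextOmega a => companions a
  | And a b | Until1 a b => companions a ++ companions b
  | UntilOmega a b => Until1 a b :: companions a ++ companions b
  end.

(* The formulas whose truth a folded model must keep recording: subformulas
   and companions. The type of an instant is its truth vector on the closure. *)
Definition closure (f : formula) : list formula := subformulas f ++ companions f.

(* Eventualities along a row, with polarity: b (true) for each a u b and a U b,
   and a (false) for each a U b, whose failure ends the row for a U b. *)
Fixpoint column_goals (f : formula) : list (formula * bool) :=
  match f with
  | Var _ => []
  | Neg a | Next1 a | NextOmega a => column_goals a
  | And a b => column_goals a ++ column_goals b
  | Until1 a b => (b, true) :: column_goals a ++ column_goals b
  | UntilOmega a b => (b, true) :: (a, false) :: column_goals a ++ column_goals b
  end.

(* Number of binary connectives; each contributes two parentheses to [length]. *)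
Fixpoint binaries (f : formula) : nat :=
  match f with
  | Var _ => 0
  | Neg a | Next1 a | NextOmega a => binaries a
  | And a b | Until1 a b | UntilOmega a b => S (binaries a + binaries b)
  end.

Lemma subformulas_length f : List.length (subformulas f) + 2 * binaries f = length f.
Proof. induction f; simpl; rewrite ?length_app; lia. Qed.

Lemma companions_length f : List.length (companions f) <= binaries f.
Proof. induction f; simpl; rewrite ?length_app; lia. Qed.

Lemma column_goals_length f : List.length (column_goals f) <= 2 * binaries f.
Proof. induction f; simpl; rewrite ?length_app; lia. Qed.

Lemma closure_length f : List.length (closure f) <= length f.
Proof.
  unfold closure. rewrite length_app.
  pose proof (subformulas_length f). pose proof (companions_length f). lia.
Qed.

Lemma subformulas_self f : In f (subformulas f).
Proof. destruct f; simpl; auto. Qed.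

Lemma subformula_closure phi f : In f (subformulas phi) -> In f (closure phi).
Proof. intro; unfold closure; apply in_or_app; auto. Qed.

Lemma companion_closure phi f : In f (companions phi) -> In f (closure phi).
Proof. intro; unfold closure; apply in_or_app; auto. Qed.

Lemma until1_goal f a b : In (Until1 a b) (subformulas f) -> In (b, true) (column_goals f).
Proof.
  induction f; simpl; intros [E|H]; try discriminate;
  try (inversion E; subst; left; auto; fail);
  try (apply in_app_or in H; destruct H as [H|H]); auto;
  try (right; apply in_or_app; auto; fail);
  try (right; right; apply in_or_app; auto; fail); try (apply in_or_app; auto).
Qed.

Lemma untilomega_goals f a b : In (UntilOmega a b) (subformulas f) ->
  In (b, true) (column_goals f) /\ In (a, false) (column_goals f) /\
  In (Until1 a b) (companions f).
Proof.
  induction f; simpl; intros [E|H]; try discriminate;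
  try (inversion E; subst; auto; fail);
  try (apply in_app_or in H; destruct H as [H|H]); auto;
  try (destruct (IHf1 H) as [? [? ?]]); try (destruct (IHf2 H) as [? [? ?]]);
  repeat split; try (right; right; apply in_or_app; auto; fail);
  try (right; apply in_or_app; auto; fail); try (apply in_or_app; auto; fail).
Qed.

Lemma column_goal_subformula f ps : In ps (column_goals f) -> In (fst ps) (subformulas f).
Proof.
  induction f; simpl; intro H; try tauto; try (right; auto; fail).
  - apply in_app_or in H; destruct H as [H|H]; right; apply in_or_app; auto.
  - destruct H as [<-|H]; [right; apply in_or_app; right; apply subformulas_self|].
    apply in_app_or in H; destruct H as [H|H]; right; apply in_or_app; auto.
  - destruct H as [<-|H]; [right; apply in_or_app; right; apply subformulas_self|].
    destruct H as [<-|H]; [right; apply in_or_app; left; apply subformulas_self|].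
    apply in_app_or in H; destruct H as [H|H]; right; apply in_or_app; auto.
Qed.

Lemma companion_shape f g : In g (companions f) ->
  exists a b, g = Until1 a b /\ In (UntilOmega a b) (subformulas f).
Proof.
  induction f; simpl; intro H; try tauto;
  try (destruct (IHf H) as [a [b [-> Hs]]]; exists a, b; auto; fail).
  all: try (destruct H as [<-|H]; [exists f1, f2; auto|]).
  all: apply in_app_or in H; destruct H as [H|H];
    [destruct (IHf1 H) as [a [b [-> Hs]]] | destruct (IHf2 H) as [a [b [-> Hs]]]];
    exists a, b; split; auto; right; apply in_or_app; auto.
Qed.

Lemma closure_until1_goal f a b : In (Until1 a b) (closure f) -> In (b, true) (column_goals f).
Proof.
  unfold closure. intro H. apply in_app_or in H. destruct H as [H|H].
  - eapply until1_goal; eauto.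
  - destruct (companion_shape f _ H) as [a' [b' [E Hs]]]. inversion E; subst.
    apply (untilomega_goals f a' b' Hs).
Qed.

(** * Fixpoint unfoldings of the until operators *)

(* A predicate U on a row satisfying U b <-> G b \/ (F b /\ U (b+1)):
   the shape shared by both untils along a row. *)
Section Unfolding.
Variables (U F G : nat -> Prop).
Hypothesis Hunf : forall b, U b <-> G b \/ (F b /\ U (S b)).

Lemma unfold_intro k : forall b, G (b + k) -> (forall i, i < k -> F (b + i)) -> U b.
Proof.
  induction k as [|k IH]; intros b HG HF; apply Hunf.
  - left. now rewrite Nat.add_0_r in HG.
  - right. split.
    + specialize (HF 0 ltac:(lia)). now rewrite Nat.add_0_r in HF.
    + apply IH.
      * now replace (S b + k) with (b + S k) by lia.
      * intros i Hi. replace (S b + i) with (b + S i) by lia. apply HF. lia.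
Qed.

Lemma unfold_back k : forall b, U (b + k) -> (forall i, i < k -> F (b + i)) -> U b.
Proof.
  induction k as [|k IH]; intros b HU HF; [now rewrite Nat.add_0_r in HU|].
  apply Hunf. right. split.
  - specialize (HF 0 ltac:(lia)). now rewrite Nat.add_0_r in HF.
  - apply IH.
    + now replace (S b + k) with (b + S k) by lia.
    + intros i Hi. replace (S b + i) with (b + S i) by lia. apply HF. lia.
Qed.

Lemma unfold_forever b : U b -> (forall k, ~ G (b + k)) -> forall k, U (b + k) /\ F (b + k).
Proof.
  intros HU HG.
  assert (HUall : forall k, U (b + k)).
  { induction k as [|k IH]; [now rewrite Nat.add_0_r|].
    apply Hunf in IH. destruct IH as [IH|[_ IH]]; [exfalso; apply (HG k); auto|].
    now replace (b + S k) with (S (b + k)) by lia. }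
  intro k. split; auto. destruct (proj1 (Hunf _) (HUall k)) as [H|[H _]]; auto.
  exfalso. apply (HG k). auto.
Qed.

Lemma unfold_first k : forall b, U b -> G (b + k) ->
  exists k', G (b + k') /\ forall i, i < k' -> F (b + i).
Proof.
  induction k as [|k IH]; intros b HU HG.
  - exists 0. split; [auto|intros; lia].
  - destruct (classic (G b)) as [Hb|Hb].
    + exists 0. rewrite Nat.add_0_r. split; [auto|intros; lia].
    + apply Hunf in HU. destruct HU as [HU|[HF HU]]; [contradiction|].
      destruct (IH (S b) HU) as [k' [Hk1 Hk2]].
      { now replace (S b + k) with (b + S k) by lia. }
      exists (S k'). split; [now replace (b + S k') with (S b + k') by lia|].
      intros [|i] Hi; [now rewrite Nat.add_0_r|].
      replace (b + S i) with (S b + i) by lia. apply Hk2. lia.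
Qed.
End Unfolding.

Lemma until1_unfold m r c a b :
  sat m r c (Until1 a b) <-> sat m r c b \/ (sat m r c a /\ sat m r (S c) (Until1 a b)).
Proof.
  cbn [sat]. split.
  - intros [[|k] [Hb Ha]].
    + left. now rewrite Nat.add_0_r in Hb.
    + right. split.
      * specialize (Ha 0 ltac:(lia)). now rewrite Nat.add_0_r in Ha.
      * exists k. split; [now replace (S c + k) with (c + S k) by lia|].
        intros i Hi. replace (S c + i) with (c + S i) by lia. apply Ha. lia.
  - intros [Hb|[Ha [k [Hb Hk]]]].
    + exists 0. rewrite Nat.add_0_r. split; auto. intros; lia.
    + exists (S k). split; [now replace (c + S k) with (S c + k) by lia|].
      intros [|i] Hi; [now rewrite Nat.add_0_r|].
      replace (c + S i) with (S c + i) by lia. apply Hk. lia.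
Qed.

Lemma untilomega_unfold m r c a b :
  sat m r c (UntilOmega a b) <->
  sat m r c b \/ (sat m r c a /\ sat m r (S c) (UntilOmega a b)).
Proof.
  cbn [sat]. unfold lex_le. split.
  - intros [s1 [s2 [Hle [Hb Ha]]]].
    destruct (classic (s1 = r /\ s2 = c)) as [[-> ->]|Hne].
    + left; auto.
    + right. split.
      * apply Ha; lia.
      * exists s1, s2. split; [lia|]. split; auto. intros t1 t2 H1 H2. apply Ha; lia.
  - intros [Hb|[Ha [s1 [s2 [Hle [Hb Hs]]]]]].
    + exists r, c. split; [lia|]. split; auto. intros; lia.
    + exists s1, s2. split; [lia|]. split; auto. intros t1 t2 H1 H2.
      destruct (classic (t1 = r /\ t2 = c)) as [[-> ->]|Hne]; auto.
      apply Hs; lia.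
Qed.

(** * Types of instants *)

Definition bsat (m : model) r c f : bool :=
  if excluded_middle_informative (sat m r c f) then true else false.

Fixpoint encode (l : list bool) : nat :=
  match l with [] => 0 | x :: l => (if x then 1 else 0) + 2 * encode l end.

Lemma encode_lt l : encode l < 2 ^ List.length l.
Proof. induction l as [|x l IH]; simpl; [lia|]. destruct x; lia. Qed.

Lemma encode_inj l1 : forall l2, List.length l1 = List.length l2 -> encode l1 = encode l2 -> l1 = l2.
Proof.
  induction l1 as [|x l1 IH]; intros [|y l2] Hl He; simpl in *; try lia; auto.
  assert (x = y /\ encode l1 = encode l2) as [-> E] by (destruct x, y; split; auto; lia).
  f_equal. apply IH; auto.
Qed.

Definition type_of (phi : formula) (m : model) r c : nat :=
  encode (map (bsat m r c) (closure phi)).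

Lemma type_of_lt phi m r c : type_of phi m r c < 2 ^ List.length (closure phi).
Proof. unfold type_of. rewrite <- (length_map (bsat m r c)). apply encode_lt. Qed.

Lemma type_of_eq phi m r c r' c' f : type_of phi m r c = type_of phi m r' c' ->
  In f (closure phi) -> (sat m r c f <-> sat m r' c' f).
Proof.
  unfold type_of. intros E Hin. apply encode_inj in E; [|now rewrite !length_map].
  pose proof (proj1 map_ext_in_iff E f Hin) as E'. unfold bsat in E'.
  destruct (excluded_middle_informative (sat m r c f));
  destruct (excluded_middle_informative (sat m r' c' f)); try discriminate; tauto.
Qed.

(** * Truth in a folded model *)

Definition folded (xi : model) (rho : nat -> nat) (col : nat -> nat -> nat) : model :=
  fun a b p => xi (rho a) (col a b) p.

Section Truth.
Variables (phi : formula) (xi : model) (rho : nat -> nat) (col : nat -> nat -> nat).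
Let eta := folded xi rho col.
Let cell a b f := sat xi (rho a) (col a b) f.
Let Sub f := In (f : formula) (subformulas phi).

Hypothesis col_succ : forall a b f, In f (closure phi) ->
  (cell a (S b) f <-> sat xi (rho a) (S (col a b)) f).
Hypothesis row_succ : forall a f, Sub f -> (cell (S a) 0 f <-> sat xi (S (rho a)) 0 f).
Hypothesis until1_fulfilled : forall a b f g, Sub (Until1 f g) ->
  cell a b (Until1 f g) -> exists k, cell a (b + k) g.
Hypothesis untilomega_leaves_row : forall a b f g, Sub (UntilOmega f g) ->
  cell a b (UntilOmega f g) -> (forall k, ~ cell a (b + k) g) -> cell (S a) 0 (UntilOmega f g).
Hypothesis untilomega_enters_row : forall a b f g, Sub (UntilOmega f g) ->
  (forall k, cell a (b + k) f) -> cell (S a) 0 (UntilOmega f g) -> cell a b (UntilOmega f g).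
Hypothesis untilomega_fulfilled : forall a b f g, Sub (UntilOmega f g) ->
  cell a b (UntilOmega f g) -> exists s1 s2, lex_le a b s1 s2 /\ cell s1 s2 g.

Let agree f := forall a b, sat eta a b f <-> cell a b f.

Lemma cell_until1_unfold a f g : In (Until1 f g) (closure phi) ->
  forall b, cell a b (Until1 f g) <-> cell a b g \/ (cell a b f /\ cell a (S b) (Until1 f g)).
Proof.
  intros Hs b. pose proof (col_succ a b _ Hs). unfold cell in *. rewrite until1_unfold. tauto.
Qed.

Lemma cell_untilomega_unfold a f g : In (UntilOmega f g) (closure phi) ->
  forall b, cell a b (UntilOmega f g) <-> cell a b g \/ (cell a b f /\ cell a (S b) (UntilOmega f g)).
Proof.
  intros Hs b. pose proof (col_succ a b _ Hs). unfold cell in *. rewrite untilomega_unfold. tauto.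
Qed.

Lemma truth_until1 f g : Sub (Until1 f g) -> agree f -> agree g -> agree (Until1 f g).
Proof.
  intros Hs IHf IHg a b.
  pose proof (cell_until1_unfold a f g (subformula_closure phi _ Hs)) as Hu. split.
  - cbn [sat]. intros [k [Hk Hi]].
    apply (unfold_intro _ _ _ Hu k); [apply IHg; auto|].
    intros i Hi'. apply IHf; auto.
  - intro Hx. destruct (until1_fulfilled a b f g Hs Hx) as [k Hk].
    destruct (unfold_first _ _ _ Hu k b Hx Hk) as [k' [H1 H2]].
    exists k'. split; [apply IHg; auto|intros i Hi; apply IHf; auto].
Qed.

Lemma truth_untilomega_sound f g a b : Sub (UntilOmega f g) -> agree f -> agree g ->
  sat eta a b (UntilOmega f g) -> cell a b (UntilOmega f g).
Proof.
  intros Hs IHf IHg. pose proof (subformula_closure phi _ Hs) as Hc.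
  cbn [sat]. intros [s1 [s2 [Hle [Hg Hf]]]]. apply IHg in Hg.
  assert (G : forall d a b, s1 = a + d -> lex_le a b s1 s2 ->
            (forall t1 t2, lex_le a b t1 t2 -> t1 < s1 \/ (t1 = s1 /\ t2 < s2) -> cell t1 t2 f) ->
            cell a b (UntilOmega f g)).
  { induction d as [|d IHd]; intros a0 b0 Hd Hl Hbet; unfold lex_le in Hl.
    - rewrite Nat.add_0_r in Hd. subst a0.
      apply (unfold_intro _ _ _ (cell_untilomega_unfold s1 f g Hc) (s2 - b0)).
      + now replace (b0 + (s2 - b0)) with s2 by lia.
      + intros i Hi. apply Hbet; unfold lex_le; lia.
    - apply untilomega_enters_row; auto.
      + intro k. apply Hbet; unfold lex_le; lia.
      + apply IHd; unfold lex_le in *; try lia.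
        intros t1 t2 H1 H2. apply Hbet; unfold lex_le in *; lia. }
  apply (G (s1 - a) a b); [unfold lex_le in Hle; lia|auto|].
  intros t1 t2 H1 H2. apply IHf; auto.
Qed.

Lemma untilomega_within_row f g a b k : Sub (UntilOmega f g) -> agree f -> agree g ->
  cell a b (UntilOmega f g) -> cell a (b + k) g -> sat eta a b (UntilOmega f g).
Proof.
  intros Hs IHf IHg Hx Hk. pose proof (subformula_closure phi _ Hs) as Hc.
  destruct (unfold_first _ _ _ (cell_untilomega_unfold a f g Hc) k b Hx Hk) as [k' [H1 H2]].
  cbn [sat]. exists a, (b + k'). split; [unfold lex_le; lia|]. split; [apply IHg; auto|].
  intros t1 t2 Ht1 Ht2. unfold lex_le in Ht1.
  replace t1 with a by lia. replace t2 with (b + (t2 - b)) by lia. apply IHf, H2. lia.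
Qed.

Lemma truth_untilomega_complete f g a b : Sub (UntilOmega f g) -> agree f -> agree g ->
  cell a b (UntilOmega f g) -> sat eta a b (UntilOmega f g).
Proof.
  intros Hs IHf IHg Hx. pose proof (subformula_closure phi _ Hs) as Hc.
  destruct (untilomega_fulfilled a b f g Hs Hx) as [s1 [s2 [Hle Hg]]].
  assert (G : forall d a b, s1 = a + d -> lex_le a b s1 s2 -> cell a b (UntilOmega f g) ->
            sat eta a b (UntilOmega f g)).
  { induction d as [|d IHd]; intros a0 b0 Hd Hl Hx0; unfold lex_le in Hl.
    - rewrite Nat.add_0_r in Hd. subst a0.
      apply (untilomega_within_row f g s1 b0 (s2 - b0)); auto.
      now replace (b0 + (s2 - b0)) with s2 by lia.
    - destruct (classic (exists k, cell a0 (b0 + k) g)) as [[k Hk]|Hno].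
      + apply (untilomega_within_row f g a0 b0 k); auto.
      + (* the row is left: f holds on the rest of it, and f U g on the next row *)
        assert (Hn : forall k, ~ cell a0 (b0 + k) g) by eauto.
        pose proof (unfold_forever _ _ _ (cell_untilomega_unfold a0 f g Hc) b0 Hx0 Hn) as Hrest.
        destruct (IHd (S a0) 0 ltac:(lia) ltac:(unfold lex_le; lia)
                   (untilomega_leaves_row a0 b0 f g Hs Hx0 Hn)) as [u1 [u2 [Hu [Hu2 Hu3]]]].
        exists u1, u2. split; [unfold lex_le in *; lia|]. split; auto.
        intros t1 t2 Ht1 Ht2. destruct (Nat.eq_dec t1 a0) as [->|Hne].
        * unfold lex_le in Ht1. replace t2 with (b0 + (t2 - b0)) by lia. apply IHf, Hrest.
        * apply Hu3; unfold lex_le in *; lia. }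
  apply (G (s1 - a) a b); auto. unfold lex_le in Hle; lia.
Qed.

Lemma truth : forall f, incl (subformulas f) (subformulas phi) -> agree f.
Proof.
  assert (Hl : forall f g, incl (subformulas f ++ subformulas g) (subformulas phi) ->
             incl (subformulas f) (subformulas phi) /\ incl (subformulas g) (subformulas phi))
    by (intros f g H; split; intros x Hx; apply H, in_or_app; auto).
  induction f as [n|f IH|f IH|f IH|f1 IH1 f2 IH2|f1 IH1 f2 IH2|f1 IH1 f2 IH2];
    intros Hs a b; unfold agree in *; pose proof (Hs _ (subformulas_self _)) as Hself;
    apply incl_cons_inv in Hs as [_ Hs]; try (apply Hl in Hs as [Hs1 Hs2]).
  - reflexivity.
  - cbn [sat]. rewrite IH; auto. reflexivity.
  - cbn [sat]. rewrite IH by auto.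
    exact (col_succ a b f (subformula_closure phi _ (Hs _ (subformulas_self f)))).
  - cbn [sat]. rewrite IH by auto.
    exact (row_succ a f (Hs _ (subformulas_self f))).
  - cbn [sat]. rewrite IH1, IH2 by auto. reflexivity.
  - exact (truth_until1 f1 f2 Hself (IH1 Hs1) (IH2 Hs2) a b).
  - split; [apply truth_untilomega_sound|apply truth_untilomega_complete];
      auto; [exact (IH1 Hs1)|exact (IH2 Hs2)|exact (IH1 Hs1)|exact (IH2 Hs2)].
Qed.
End Truth.

(** * Folding a model along lassos *)

Section Folding.
Variables (phi : formula) (xi : model) (t1 t2 : nat).

Definition ntypes : nat := 2 ^ List.length (closure phi).

Definition row_type (x : nat) : nat := type_of phi xi x 0.
Definition column_type (r x : nat) : nat := type_of phi xi r x.

(* Rows must keep visiting rows whose first instant satisfies a companion f u g. *)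
Definition row_goal (f : formula) (x : nat) : Prop := sat xi x 0 f.

(* Columns of row r must keep visiting instants where a column goal has its polarity. *)
Definition column_goal (r : nat) (ps : formula * bool) (x : nat) : Prop :=
  if snd ps then sat xi r x (fst ps) else ~ sat xi r x (fst ps).

Lemma row_goals_invariant :
  forall P, In P (map row_goal (companions phi)) ->
  forall x y, row_type x = row_type y -> P x -> P y.
Proof.
  intros P HP x y E. apply in_map_iff in HP. destruct HP as [f [<- Hf]].
  apply (type_of_eq phi xi x 0 y 0 f E (companion_closure phi f Hf)).
Qed.

Lemma column_goals_invariant r :
  forall P, In P (map (column_goal r) (column_goals phi)) ->
  forall x y, column_type r x = column_type r y -> P x -> P y.
Proof.
  intros P HP x y E. apply in_map_iff in HP. destruct HP as [ps [<- Hps]].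
  pose proof (type_of_eq phi xi r x r y (fst ps) E
    (subformula_closure phi _ (column_goal_subformula phi ps Hps))).
  unfold column_goal. destruct (snd ps); tauto.
Qed.

(* The new rows: first row t1, read from column t2; then a lasso of rows
   starting at t1+1, each read from column 0. *)
Definition row_lasso : lasso row_type ntypes (map row_goal (companions phi)) (S t1) :=
  some_lasso row_type ntypes (fun x => type_of_lt phi xi x 0) _ row_goals_invariant (S t1).

Definition column_lasso (r c : nat) :
  lasso (column_type r) ntypes (map (column_goal r) (column_goals phi)) c :=
  some_lasso (column_type r) ntypes (fun x => type_of_lt phi xi r x) _
    (column_goals_invariant r) c.

Definition rho (a : nat) : nat := match a with 0 => t1 | S a' => pos row_lasso a' end.
Definition start (a : nat) : nat := match a with 0 => t2 | S _ => 0 end.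
Definition col_lasso (a : nat) := column_lasso (rho a) (start a).
Definition col (a b : nat) : nat := pos (col_lasso a) b.

Let cell a b f := sat xi (rho a) (col a b) f.

Lemma col_succ a b f : In f (closure phi) ->
  (cell a (S b) f <-> sat xi (rho a) (S (col a b)) f).
Proof. apply type_of_eq, (pos_step (col_lasso a)). Qed.

Lemma row_succ a f : In f (closure phi) ->
  (sat xi (rho (S a)) 0 f <-> sat xi (S (rho a)) 0 f).
Proof.
  intro Hf. destruct a as [|a]; cbn [rho].
  - rewrite (pos_start row_lasso). reflexivity.
  - apply (type_of_eq phi xi _ _ _ _ f (pos_step row_lasso a) Hf).
Qed.

Lemma col_start a : col (S a) 0 = 0.
Proof. exact (pos_start (col_lasso (S a))). Qed.

Lemma column_recurrence a ps b : In ps (column_goals phi) ->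
  (exists x, horizon (col_lasso a) <= x /\ column_goal (rho a) ps x) ->
  exists k, column_goal (rho a) ps (col a (b + stem (col_lasso a) + k)).
Proof.
  intros Hps Hx. apply (pos_recurrent (col_lasso a)); auto; [|lia].
  apply in_map; auto.
Qed.

Lemma col_late a b : horizon (col_lasso a) <= col a (b + stem (col_lasso a)).
Proof. apply (pos_late (col_lasso a)). lia. Qed.

Lemma until1_fulfilled a b f g : In (Until1 f g) (closure phi) ->
  cell a b (Until1 f g) -> exists k, cell a (b + k) g.
Proof.
  intros Hs Hx. apply NNPP. intro Hno.
  assert (Hn : forall k, ~ cell a (b + k) g) by eauto.
  pose proof (col_late a b) as Hlate. set (nP := stem (col_lasso a)) in *.
  destruct (proj1 (unfold_forever _ _ _ (cell_until1_unfold phi xi rho col col_succ a f g Hs) b Hx Hn nP))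
    as [k' [Hk' _]].
  destruct (column_recurrence a (g, true) b (closure_until1_goal phi f g Hs)) as [k Hk].
  - exists (col a (b + nP) + k'). split; [lia|exact Hk'].
  - apply (Hn (nP + k)). unfold column_goal in Hk. cbn in Hk.
    now replace (b + (nP + k)) with (b + nP + k) by lia.
Qed.

Lemma untilomega_leaves_row a b f g : In (UntilOmega f g) (subformulas phi) ->
  cell a b (UntilOmega f g) -> (forall k, ~ cell a (b + k) g) ->
  cell (S a) 0 (UntilOmega f g).
Proof.
  intros Hs Hx Hn. pose proof (subformula_closure phi _ Hs) as Hc.
  destruct (untilomega_goals phi f g Hs) as [Wg _].
  pose proof (col_late a b) as Hlate. set (nP := stem (col_lasso a)) in *.
  (* g is false on row rho a beyond the horizon, otherwise it would recur *)
  assert (Hng : forall x, horizon (col_lasso a) <= x -> ~ sat xi (rho a) x g).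
  { intros x Hx' Hg. destruct (column_recurrence a (g, true) b Wg) as [k Hk].
    - exists x. split; auto.
    - apply (Hn (nP + k)). unfold column_goal in Hk. cbn in Hk.
      now replace (b + (nP + k)) with (b + nP + k) by lia. }
  destruct (proj1 (unfold_forever _ _ _ (cell_untilomega_unfold phi xi rho col col_succ a f g Hc) b Hx Hn nP))
    as [s1 [s2 [Hle [Hs2 Hbet]]]].
  unfold cell. rewrite col_start. apply row_succ; [exact Hc|].
  assert (s1 <> rho a) by (intro E; subst s1; unfold lex_le in Hle; apply (Hng s2); [lia|auto]).
  exists s1, s2. split; [unfold lex_le in *; lia|]. split; auto.
  intros t3 t4 Ht1 Ht2. apply Hbet; auto. unfold lex_le in *; lia.
Qed.

Lemma untilomega_enters_row a b f g : In (UntilOmega f g) (subformulas phi) ->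
  (forall k, cell a (b + k) f) -> cell (S a) 0 (UntilOmega f g) -> cell a b (UntilOmega f g).
Proof.
  intros Hs Hall Hx. pose proof (subformula_closure phi _ Hs) as Hc.
  destruct (untilomega_goals phi f g Hs) as [_ [Wf _]].
  pose proof (col_late a b) as Hlate. set (nP := stem (col_lasso a)) in *.
  (* f is true on row rho a beyond the horizon, otherwise its failure would recur *)
  assert (Hpf : forall x, horizon (col_lasso a) <= x -> sat xi (rho a) x f).
  { intros x Hx'. apply NNPP. intro Hnf.
    destruct (column_recurrence a (f, false) b Wf) as [k Hk].
    - exists x. split; auto.
    - rewrite <- Nat.add_assoc in Hk. apply Hk, Hall. }
  unfold cell in Hx. rewrite col_start in Hx. apply row_succ in Hx; [|exact Hc].
  assert (Hloop : cell a (b + nP) (UntilOmega f g)).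
  { destruct Hx as [s1 [s2 [Hle [Hs2 Hbet]]]].
    exists s1, s2. split; [unfold lex_le in *; lia|]. split; auto.
    intros t3 t4 Ht1 Ht2. destruct (Nat.eq_dec t3 (rho a)) as [->|Hne].
    - apply Hpf. unfold lex_le in Ht1. lia.
    - apply Hbet; auto. unfold lex_le in *; lia. }
  apply (unfold_back _ _ _ (cell_untilomega_unfold phi xi rho col col_succ a f g Hc) nP b Hloop).
  intros i _. apply Hall.
Qed.

Lemma untilomega_fulfilled a b f g : In (UntilOmega f g) (subformulas phi) ->
  cell a b (UntilOmega f g) -> exists s1 s2, lex_le a b s1 s2 /\ cell s1 s2 g.
Proof.
  intros Hs Hx. apply NNPP. intro Hno.
  set (rP := stem row_lasso).
  (* otherwise f U g would be carried to the start of every later row *)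
  assert (Hall : forall d, cell (S (a + d)) 0 (UntilOmega f g)).
  { assert (Step : forall a' b', lex_le a b a' b' -> cell a' b' (UntilOmega f g) ->
               cell (S a') 0 (UntilOmega f g)).
    { intros a' b' Hl Hx'. apply (untilomega_leaves_row a' b' f g Hs Hx'). intros k Hk.
      apply Hno. exists a', (b' + k). split; auto. unfold lex_le in *; lia. }
    induction d as [|d IHd].
    - rewrite Nat.add_0_r. apply (Step a b); auto. unfold lex_le; lia.
    - replace (a + S d) with (S (a + d)) by lia. apply (Step (S (a + d)) 0); auto.
      unfold lex_le; lia. }
  (* on a loop row, the companion f u g holds at the row where f U g is fulfilled *)
  destruct (untilomega_goals phi f g Hs) as [_ [_ Wc]].
  specialize (Hall rP). unfold cell in Hall. rewrite col_start in Hall. cbn [rho] in Hall.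
  pose proof (pos_late row_lasso (a + rP) ltac:(lia)) as Hlate.
  destruct Hall as [s1 [s2 [Hle [Hs2 Hbet]]]].
  destruct (pos_recurrent row_lasso (row_goal (Until1 f g)) (in_map _ _ _ Wc))
    with (b := a + rP) as [k Hk]; [|lia|].
  { exists s1. split; [unfold lex_le in *; lia|]. exists s2. split; [auto|].
    intros i Hi. apply Hbet; unfold lex_le in *; lia. }
  (* so it is fulfilled on that row, contradicting the assumption *)
  assert (Hk' : cell (S (a + rP + k)) 0 (Until1 f g)) by (unfold cell; now rewrite col_start).
  destruct (until1_fulfilled _ _ f g (companion_closure phi _ Wc) Hk') as [k' Hk''].
  apply Hno. exists (S (a + rP + k)), (0 + k'). split; [unfold lex_le; lia|auto].
Qed.

Lemma rho_periodic i : stem row_lasso < i -> rho (i + loop row_lasso) = rho i.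
Proof.
  destruct i as [|a]; [lia|]. intro Hi. cbn [rho Nat.add].
  apply (pos_periodic row_lasso). lia.
Qed.

Lemma folded_row_periodic i j p : stem row_lasso < i ->
  folded xi rho col i j p = folded xi rho col (i + loop row_lasso) j p.
Proof.
  intro Hi. unfold folded, col, col_lasso. rewrite rho_periodic by auto.
  destruct i as [|a]; [lia|]. reflexivity.
Qed.

Lemma folded_col_periodic i j p : stem (col_lasso i) < j ->
  folded xi rho col i j p = folded xi rho col i (j + loop (col_lasso i)) p.
Proof. intro Hj. unfold folded, col. rewrite (pos_periodic (col_lasso i)); auto. lia. Qed.

Lemma folded_sat : sat xi t1 t2 phi -> sat (folded xi rho col) 0 0 phi.
Proof.
  intro H. apply (truth phi xi rho col).
  - exact col_succ.
  - intros a f Hf. rewrite col_start. apply row_succ, subformula_closure, Hf.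
  - intros a b f g Hs. apply until1_fulfilled, subformula_closure, Hs.
  - exact untilomega_leaves_row.
  - exact untilomega_enters_row.
  - exact untilomega_fulfilled.
  - apply incl_refl.
  - cbn. unfold col, col_lasso. now rewrite (pos_start (column_lasso (rho 0) (start 0))).
Qed.
End Folding.

(** * Size bounds *)

(* At most 2^length(phi) types, as the closure has at most length(phi) formulas. *)
Lemma ntypes_bound phi : ntypes phi <= 2 ^ length phi.
Proof. apply Nat.pow_le_mono_r; [lia|apply closure_length]. Qed.

Lemma loop_size_bound phi n : n <= 2 * binaries phi ->
  (n + 1) * ntypes phi <= length phi * 2 ^ length phi.
Proof.
  intro Hn. pose proof (subformulas_length phi).
  assert (1 <= List.length (subformulas phi)) by (destruct phi; simpl; lia).
  apply Nat.mul_le_mono; [lia|apply ntypes_bound].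
Qed.

(* The folded model, with k and m the stem and loop of the row lasso and
   l i, n i those of the column lasso of row i, has all required properties. *)
Theorem mainTheorem16 (phi : formula) (xi : model) (t1 t2 : nat)
  (H : sat xi t1 t2 phi) :
  exists (eta : model) (k m : nat) (l n : nat -> nat),
    0 < k /\ 0 < m /\
    (forall i, 1 <= i <= k + m -> 0 < l i /\ 0 < n i) /\
    sat eta 0 0 phi /\
    (forall i j p, k < i -> eta i j p = eta (i + m) j p) /\
    (forall i j p, 1 <= i <= k + m -> l i < j -> eta i j p = eta i (j + n i) p) /\
    (m <= length phi * 2 ^ length phi /\
     forall i, 1 <= i <= m -> n i <= length phi * 2 ^ length phi) /\
    (k <= 2 ^ length phi /\
     forall i, 1 <= i <= k + m -> l i <= 2 ^ length phi).
Proof.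
  set (R := row_lasso phi xi t1).
  set (C := col_lasso phi xi t1 t2).
  exists (folded xi (rho phi xi t1) (col phi xi t1 t2)), (stem R), (loop R),
    (fun i => stem (C i)), (fun i => loop (C i)).
  pose proof (ntypes_bound phi) as Hn.
  pose proof (stem_bound R). pose proof (loop_bound R) as HR. rewrite length_map in HR.
  pose proof (companions_length phi).
  pose proof (loop_size_bound phi (List.length (companions phi)) ltac:(lia)).
  assert (HC : forall i, 1 <= stem (C i) <= ntypes phi /\
             1 <= loop (C i) <= length phi * 2 ^ length phi).
  { intro i. pose proof (stem_bound (C i)). pose proof (loop_bound (C i)) as HL.
    rewrite length_map in HL. pose proof (loop_size_bound phi _ (column_goals_length phi)).
    lia. }
  repeat split; try lia; try (intros; specialize (HC i); lia).
  - now apply folded_sat.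
  - intros i j p. apply folded_row_periodic.
  - intros i j p _. apply folded_col_periodic.
Qed.
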